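(* For all integers $k\ge2$ and $n\ge1$, \[ k\sum_{i=1}^{n}\bigl(\sigma(i)+\sigma_o(i)\bigr)(-1)^{n-i}r_k(n-i)=(-1)^{n+1}n\,r_k(n). \]
   Context: $r_k(m)$ is the number of $(x_1,\dots,x_k)\in\mathbb{Z}^k$ with $x_1^2+\dots+x_k^2=m$; in particular $r_k(0)=1$. $\sigma(i)$ is the sum of positive divisors of $i$ and $\sigma_o(i)$ the sum of odd positive divisors of $i$. *)

From mathcomp Require Import all_boot all_order all_algebra.
Set Implicit Arguments. Unset Strict Implicit. Unset Printing Implicit Defensive.
Import Order.TTheory GRing.Theory Num.Theory.

Definition sigma (i : nat) : nat := \sum_(d <- divisors i) d.
Definition sigma_o (i : nat) : nat := \sum_(d <- divisors i | odd d) d.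

Definition shiftv (k m : nat) (v : {ffun 'I_k -> 'I_(2 * m + 1)}) (j : 'I_k) : int :=
  (nat_of_ord (v j))%:Z - m%:Z.

(* r_k(m) = #{ x in Z^k | x_1^2 + ... + x_k^2 = m }.  Any solution has
   |x_j| <= m, so it suffices to count over the box [-m, m]^k. *)
Definition r (k m : nat) : nat :=
  #|[set v : {ffun 'I_k -> 'I_(2 * m + 1)} |
      (\sum_(j < k) (shiftv v j) ^+ 2 == m%:Z)%R]|.

(* With theta = sum_(m in Z) (-1)^m X^(m^2) one has theta^k = sum_i (-1)^i r_k(i) X^i,
   and Jacobi's triple product gives theta = prod_(j >= 1) (1 - X^(2j)) (1 - X^(2j-1))^2.
   The logarithmic derivative X d/dX of theta^k is therefore -k L theta^k, where
   L = sum_e e X^e / (1 - X^e) over the exponents e of the product; the l-th coefficient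
   of L is sigma(l) + sigma_o(l), each divisor being counted once and each odd divisor
   once more.  All of this is done
   with polynomials modulo X^(n+1), where the triple product follows from the finite
   q-binomial theorem: each Gaussian binomial [2n, k] in X^2, multiplied by
   (X^2; X^2)_n, is 1 up to an order that is large enough. *)

From mathcomp Require Import all_boot all_order all_algebra zify ring.
Import Order.TTheory GRing.Theory Num.Theory.
Set Implicit Arguments. Unset Strict Implicit. Unset Printing Implicit Defensive.

Section GaussianBinomial.
Variables (R : comPzRingType) (t : R).
Local Open Scope ring_scope.

Fixpoint qbinom (N k : nat) : R :=
  match N, k with
  | _, 0 => 1
  | 0, _.+1 => 0
  | N'.+1, k'.+1 => qbinom N' k' + t ^+ k'.+1 * qbinom N' k'.+1
  end.

Lemma qbinom_small N k : (N < k)%N -> qbinom N k = 0.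
Proof.
elim: N k => [|N IH] [|k] //= lt_N_k.
by rewrite !IH ?mulr0 ?addr0 // ltnW.
Qed.

Lemma q_binomial N (x y : R) :
  \prod_(j < N) (y + x * t ^+ j) =
  \sum_(k < N.+1) qbinom N k * t ^+ 'C(k, 2) * x ^+ k * y ^+ (N - k).
Proof.
elim: N x => [|N IH] x; first by rewrite big_ord0 big_ord1 /= !mulr1.
rewrite big_ord_recl expr0 mulr1.
under eq_bigr => j _ do rewrite /= exprS mulrA.
rewrite IH mulrDl !big_distrr [RHS]big_ord_recl /= subn0 !mulr1.
have splitS (k : 'I_N.+1) :
    qbinom N.+1 k.+1 * t ^+ 'C(k.+1, 2) * x ^+ k.+1 * y ^+ (N.+1 - k.+1) =
    qbinom N k * t ^+ 'C(k, 2) * (x * t) ^+ k * y ^+ (N - k) * x +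
    qbinom N k.+1 * t ^+ 'C(k.+1, 2) * (x * t) ^+ k.+1 * y ^+ (N - k).
  by rewrite /= subSS binS bin1 !exprD !exprMn !exprS; ring.
under [in RHS]eq_bigr => k _ do rewrite [bump 0 k]add1n splitS.
rewrite big_split /= addrC addrA; congr (_ + _); last first.
  by apply: eq_bigr => k _; ring.
rewrite big_ord_recl /= subn0 expr0 !mulr1 mul1r exprS; congr (_ + _).
  by case: N {IH splitS} => [|N]; rewrite /= mul1r.
rewrite big_ord_recr /= qbinom_small // !mul0r addr0.
apply: eq_bigr => k _; rewrite /bump leq0n add1n.
have -> : (N - k = (N - k.+1).+1)%N by case: k => k /=; lia.
by rewrite !exprS !exprMn; ring.
Qed.

Definition qpoch (N : nat) : R := \prod_(j < N) (1 - t ^+ j.+1).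

Lemma qpochS N : qpoch N.+1 = qpoch N * (1 - t ^+ N.+1).
Proof. by rewrite /qpoch big_ord_recr. Qed.

Lemma qpoch_cat a N : (a <= N)%N ->
  qpoch N = qpoch a * \prod_(a <= j < N) (1 - t ^+ j.+1).
Proof.
move=> le_aN; rewrite /qpoch -!(big_mkord xpredT (fun j => 1 - t ^+ j.+1)).
exact: big_cat_nat.
Qed.

Lemma qbinom_qpoch N k : (k <= N)%N ->
  qbinom N k * qpoch k * qpoch (N - k) = qpoch N.
Proof.
elim: N k => [|N IH] [|k] //=; rewrite ?subn0 /qpoch ?big_ord0 ?mulr1 ?mul1r //.
rewrite ltnS subSS -!/(qpoch _) => le_kN.
have -> : (qbinom N k + t ^+ k.+1 * qbinom N k.+1) * qpoch k.+1 * qpoch (N - k) =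
    (1 - t ^+ k.+1) * (qbinom N k * qpoch k * qpoch (N - k)) +
    t ^+ k.+1 * (qbinom N k.+1 * qpoch k.+1 * qpoch (N - k)).
  by rewrite qpochS; ring.
rewrite IH //; case: (ltnP k N) => [lt_kN | le_Nk]; last first.
  have -> : k = N by lia.
  by rewrite qbinom_small // !mul0r mulr0 addr0 qpochS mulrC.
have -> : (N - k = (N - k.+1).+1)%N by lia.
rewrite [qpoch (N - k.+1).+1]qpochS [qbinom N k.+1 * _ * _]mulrA IH //.
rewrite qpochS (_ : t ^+ N.+1 = t ^+ k.+1 * t ^+ (N - k.+1).+1); first by ring.
by rewrite -exprD; congr (_ ^+ _); lia.
Qed.

End GaussianBinomial.

Lemma sum_eq_mul_succ e M l : 0 < e -> l <= M ->
  \sum_(s < M) (l == e * s.+1) = (e %| l) && (0 < l).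
Proof.
move=> e_gt0 le_lM; have [/andP [/dvdnP [c def_l] l_gt0] | not_dvd] := boolP (_ && _).
  rewrite {}def_l mulnC in le_lM l_gt0 *.
  have c_gt0 : 0 < c by move: l_gt0; rewrite muln_gt0 => /andP [].
  have lt_cM : c.-1 < M by rewrite prednK //; have := leq_pmull c e_gt0; lia.
  rewrite (bigD1 (Ordinal lt_cM)) //= prednK // eqxx big1 // => s ne_s.
  by rewrite eqn_pmul2l // -(inj_eq val_inj) /= in ne_s *; lia.
apply: big1 => s _; case: eqP => // eq_l.
by move: not_dvd; rewrite eq_l dvdn_mulr //= muln_gt0 e_gt0.
Qed.

Section CongruenceModXn.
Variable R : comNzRingType.
Implicit Types (p q u v : {poly R}).
Local Open Scope ring_scope.

Definition congX (M : nat) p q := exists h, p = q + 'X^M * h.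

Lemma congX_refl M p : congX M p p.
Proof. by exists 0; rewrite mulr0 addr0. Qed.

Lemma congX_sym M p q : congX M p q -> congX M q p.
Proof. by case=> h ->; exists (- h); rewrite mulrN addrK. Qed.

Lemma congX_trans M p q u : congX M p q -> congX M q u -> congX M p u.
Proof. by case=> h -> [h' ->]; exists (h' + h); rewrite mulrDr addrA. Qed.

Lemma congXD M p q u v : congX M p q -> congX M u v -> congX M (p + u) (q + v).
Proof. by case=> h -> [h' ->]; exists (h + h'); ring. Qed.

Lemma congXMl M p q u : congX M p q -> congX M (u * p) (u * q).
Proof. by case=> h ->; exists (u * h); ring. Qed.

Lemma congXMr M p q u : congX M p q -> congX M (p * u) (q * u).
Proof. by case=> h ->; exists (h * u); ring. Qed.

Lemma congXM M p q u v : congX M p q -> congX M u v -> congX M (p * u) (q * v).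
Proof. by move=> pq uv; apply: congX_trans (congXMr _ pq) (congXMl _ uv). Qed.

Lemma congX_sum M (I : Type) (s : seq I) (F G : I -> {poly R}) :
  (forall i, congX M (F i) (G i)) ->
  congX M (\sum_(i <- s) F i) (\sum_(i <- s) G i).
Proof.
by move=> FG; apply: (big_ind2 (congX M)) => //; [apply: congX_refl | apply: congXD].
Qed.

Lemma congX_prod1 M (I : eqType) (s : seq I) (F : I -> {poly R}) :
  {in s, forall i, congX M (F i) 1} -> congX M (\prod_(i <- s) F i) 1.
Proof.
move=> F1; rewrite big_seq; apply: (big_ind (fun p => congX M p 1)) => //.
- exact: congX_refl.
- by move=> p q p1 q1; rewrite -(mulr1 1); apply: congXM.
Qed.

Lemma congX_leq N M p q : (N <= M)%N -> congX M p q -> congX N p q.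
Proof. by move=> le_NM [h ->]; exists ('X^(M - N) * h); rewrite mulrA -exprD subnKC. Qed.

Lemma congX_mulXn d M p q : congX M p q -> congX (d + M) ('X^d * p) ('X^d * q).
Proof. by case=> h ->; exists h; rewrite exprD; ring. Qed.

Lemma congX_coef M p q i : congX M p q -> (i < M)%N -> p`_i = q`_i.
Proof. by case=> h -> lt_iM; rewrite coefD coefXnM lt_iM addr0. Qed.

Definition xderiv p := 'X * p^`().

Lemma coef_xderiv p i : (xderiv p)`_i = p`_i *+ i.
Proof. by rewrite /xderiv coefXM; case: i => [|i] //=; rewrite coef_deriv. Qed.

Lemma xderivM p q : xderiv (p * q) = xderiv p * q + p * xderiv q.
Proof. by rewrite /xderiv derivM; ring. Qed.

Lemma congX_xderiv M p q : congX M.+1 p q -> congX M.+1 (xderiv p) (xderiv q).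
Proof.
case=> h ->; rewrite /xderiv derivD derivM derivXn.
exists (h *+ M.+1 + 'X * h^`()).
by rewrite -[h *+ _]mulr_natl -['X^_ *+ _]mulr_natl exprS; ring.
Qed.

Lemma congX_xderivX M T L k : congX M (xderiv T) (- L * T) ->
  congX M (xderiv (T ^+ k)) (- (L *+ k) * T ^+ k).
Proof.
move=> dT; elim: k => [|k IH].
  by rewrite /xderiv derivC mulr0 mulr0n oppr0 mul0r; apply: congX_refl.
rewrite [in xderiv _]exprS xderivM.
apply: congX_trans (congXD (congXMr _ dT) (congXMl T IH)) _.
by exists 0; rewrite mulrS exprS; ring.
Qed.

(* The Lambert term e X^e / (1 - X^e) truncated modulo X^(e (M + 1)). *)
Definition lambert (e M : nat) : {poly R} := \sum_(s < M) e%:R * 'X^(e * s.+1).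

Lemma lambertM1subXn e M :
  lambert e M * (1 - 'X^e) = e%:R * 'X^e - e%:R * 'X^(e * M.+1).
Proof.
elim: M => [|M IH]; first by rewrite /lambert big_ord0 mul0r muln1 subrr.
rewrite /lambert big_ord_recr mulrDl -/(lambert e M) IH.
by rewrite (_ : (e * M.+2 = e * M.+1 + e)%N) ?exprD; [ring | lia].
Qed.

Lemma coef_lambert e M l : (0 < e)%N -> (l <= M)%N ->
  (lambert e M)`_l = (e * ((e %| l) && (0 < l)))%N%:R.
Proof.
move=> e_gt0 le_lM; rewrite /lambert coef_sum.
under eq_bigr => s _ do rewrite mulr_natl coefMn coefXn.
by rewrite sumrMnl -natr_sum sum_eq_mul_succ // natrM mulr_natl.
Qed.

Lemma congX_xderiv_1subXn e M : (0 < e)%N ->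
  congX M (xderiv (1 - 'X^e)) (- lambert e M * (1 - 'X^e)).
Proof.
move=> e_gt0; rewrite mulNr lambertM1subXn /xderiv derivB derivC derivXn sub0r.
rewrite mulrN -mulr_natl mulrCA -exprS prednK //.
exists (- (e%:R * 'X^(e * M.+1 - M))).
by rewrite mulrN mulrCA -exprD subnKC; [ring | nia].
Qed.

Lemma congX_xderiv_prod_1subXn M (s : seq nat) : all (leq 1) s ->
  congX M (xderiv (\prod_(e <- s) (1 - 'X^e)))
          (- (\sum_(e <- s) lambert e M) * \prod_(e <- s) (1 - 'X^e)).
Proof.
elim: s => [|e s IH] /=.
  by move=> _; rewrite !big_nil /xderiv derivC mulr0 oppr0 mul0r; apply: congX_refl.
case/andP=> e_gt0 s_gt0; rewrite !big_cons xderivM.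
apply: congX_trans (congXD (congXMr _ (congX_xderiv_1subXn M e_gt0))
                           (congXMl (1 - 'X^e) (IH s_gt0))) _.
by exists 0; ring.
Qed.

End CongruenceModXn.

Lemma bin2_double_add k : 2 * 'C(k, 2) + k = k * k.
Proof. elim: k => // k IH; rewrite binS bin1; nia. Qed.

Lemma jacobi_exponent n k : k <= 2 * n ->
  2 * 'C(k, 2) + (2 * n).-1 * (2 * n - k) = 2 * 'C(n, 2) + (2 * n).-1 * n + `|k - n| ^ 2.
Proof.
move=> le_k2n; have := bin2_double_add k; have := bin2_double_add n.
move: (2 * 'C(k, 2)) (2 * 'C(n, 2)) => a b sq_n sq_k.
case: n => [|m] in le_k2n sq_n *; first by nia.
have -> : (2 * m.+1).-1 = (2 * m).+1 by lia.
have [le_kn | le_nk] := leqP k m.+1.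
- have [d def_n] : exists d, m.+1 = k + d by exists (m.+1 - k); lia.
  have -> : `|k - m.+1| = d by lia.
  have -> : 2 * m.+1 - k = k + 2 * d by lia.
  by rewrite def_n in sq_n; nia.
- have [d def_k] : exists d, k = m.+1 + d by exists (k - m.+1); lia.
  have [e def_n] : exists e, m.+1 = d + e by exists (m.+1 - d); lia.
  have -> : `|k - m.+1| = d by lia.
  have -> : 2 * m.+1 - k = e by lia.
  by rewrite def_k in sq_k; nia.
Qed.

(* Up to this order, the k-th term of the finite triple product times (X^2; X^2)_n
   agrees with the k-th term of theta. *)
Lemma jacobi_order n k : k <= 2 * n ->
  n.+1 <= `|k - n| ^ 2 + 2 * (minn k (2 * n - k)).+1.
Proof.
move=> le_k2n.
have [d [e [-> -> ->]]] : exists d e, [/\ `|k - n| = d, minn k (2 * n - k) = e & n = d + e].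
  by exists `|k - n|, (n - `|k - n|); split; lia.
nia.
Qed.

Section JacobiTripleProduct.
Variable R : comNzRingType.
Local Open Scope ring_scope.

Definition oddprod n : {poly R} := \prod_(i < n) (1 - 'X^((2 * i).+1)).

(* The index k stands for m = k - n, so this is theta truncated to |m| <= n. *)
Definition theta_trunc n : {poly R} :=
  \sum_(k < (2 * n).+1) (-1) ^+ (k + n) * 'X^(`|k - n| ^ 2)%N.

Lemma lreg_1subXn m : (0 < m)%N -> GRing.lreg (1 - 'X^m : {poly R}).
Proof.
by move=> m_gt0; rewrite -opprB -polyC1; apply/lregN/monic_lreg/monicXnsubC.
Qed.

Lemma lreg_qpochXn n m : (0 < m)%N -> GRing.lreg (qpoch ('X^m : {poly R}) n).
Proof.
move=> m_gt0; rewrite /qpoch.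
apply: (big_ind (@GRing.lreg {poly R})) => [|p q|j _]; [exact: lreg1 | exact: lregM |].
by rewrite -exprM; apply: lreg_1subXn; rewrite muln_gt0 m_gt0.
Qed.

Lemma qbinom_qpochXn_congX m a b n (G : {poly R}) : (0 < m)%N ->
  G * qpoch 'X^m a * qpoch 'X^m b = qpoch 'X^m (a + b) -> (a <= n <= b)%N ->
  congX (m * a.+1) (G * qpoch 'X^m n) 1.
Proof.
move=> m_gt0 split_ab /andP [le_an le_nb].
have qpoch_a : G * qpoch 'X^m a = \prod_(b <= j < a + b) (1 - 'X^m ^+ j.+1).
  apply: (@lreg_qpochXn b m m_gt0); rewrite mulrC -(qpoch_cat _ (leq_addl a b)).
  by rewrite -split_ab mulrC mulrA.
rewrite (qpoch_cat _ le_an) mulrA qpoch_a -[X in congX _ _ X](mulr1 1).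
have factor_congX j : (a <= j)%N -> congX (m * a.+1) (1 - 'X^m ^+ j.+1) 1.
  move=> le_aj; exists (- 'X^(m * j.+1 - m * a.+1)).
  by rewrite -exprM mulrN -exprD subnKC; [ring | rewrite leq_mul2l ltnS le_aj orbT].
by apply: congXM; apply: congX_prod1 => j; rewrite mem_index_iota => /andP [low_j _];
  apply: factor_congX; lia.
Qed.

Lemma prod_XsubX2_oddprod n :
  \prod_(j < 2 * n) ('X^((2 * n).-1) + (-1) * 'X^2 ^+ j) =
  (-1) ^+ n * 'X^(2 * 'C(n, 2) + (2 * n).-1 * n) * (oddprod n * oddprod n) :> {poly R}.
Proof.
rewrite -(big_mkord xpredT (fun j => 'X^((2 * n).-1) + (-1) * 'X^2 ^+ j)).
rewrite (big_cat_nat (leq0n n) (_ : n <= 2 * n)%N); last by lia.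
have low : \prod_(0 <= j < n) ('X^((2 * n).-1) + (-1) * 'X^2 ^+ j) =
    \prod_(0 <= j < n) ((-1) * 'X^(2 * j)) *
    \prod_(0 <= j < n) (1 - 'X^((2 * (n - j.+1)).+1)) :> {poly R}.
  rewrite -big_split; apply: eq_big_nat => j /andP [_ lt_jn] /=.
  rewrite -exprM -mulrA mulrBr mulr1 -exprD.
  have -> : (2 * j + (2 * (n - j.+1)).+1 = (2 * n).-1)%N by lia.
  by ring.
have high : \prod_(n <= j < 2 * n) ('X^((2 * n).-1) + (-1) * 'X^2 ^+ j) =
    \prod_(0 <= j < n) 'X^((2 * n).-1) * \prod_(0 <= j < n) (1 - 'X^((2 * j).+1))
    :> {poly R}.
  rewrite -{1}(add0n n) big_addn -big_split (_ : 2 * n - n = n)%N; last by lia.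
  apply: eq_big_nat => j /andP [_ lt_jn] /=.
  rewrite -exprM mulrBr mulr1 -exprD.
  have -> : ((2 * n).-1 + (2 * j).+1 = 2 * (j + n))%N by lia.
  by ring.
rewrite low high big_split /= !prodr_const_nat prodrXr -big_distrr /= bin2_sum subn0.
have -> : \prod_(0 <= j < n) (1 - 'X^((2 * (n - j.+1)).+1)) = oddprod n :> {poly R}.
  rewrite big_nat_rev big_mkord; apply: eq_bigr => i _.
  by congr (_ - 'X^(_)); have := ltn_ord i; lia.
by rewrite big_mkord -/(oddprod n) -exprM exprD; ring.
Qed.

Lemma oddprod_sqr n : oddprod n * oddprod n = (-1) ^+ n *
  \sum_(k < (2 * n).+1) (-1) ^+ k * qbinom 'X^2 (2 * n) k * 'X^(`|k - n| ^ 2)%N :> {poly R}.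
Proof.
set c := (2 * 'C(n, 2) + (2 * n).-1 * n)%N.
have summand (k : 'I_(2 * n).+1) :
    qbinom 'X^2 (2 * n) k * 'X^2 ^+ 'C(k, 2) * (-1) ^+ k * 'X^((2 * n).-1) ^+ (2 * n - k) =
    'X^c * ((-1) ^+ k * qbinom 'X^2 (2 * n) k * 'X^(`|k - n| ^ 2)%N) :> {poly R}.
  by rewrite -!exprM [RHS]mulrCA -exprD -(jacobi_exponent (ltn_ord k)) exprD; ring.
have := q_binomial ('X^2 : {poly R}) (2 * n) (-1) 'X^((2 * n).-1).
rewrite prod_XsubX2_oddprod (eq_bigr _ (fun k _ => summand k)) -big_distrr /=.
by rewrite -mulrA mulrCA => /(monic_lreg (monicXn R c)) <-; rewrite signrMK.
Qed.

Lemma qbinom_qpoch_congX n k : (k <= 2 * n)%N ->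
  congX (2 * (minn k (2 * n - k)).+1) (qbinom 'X^2 (2 * n) k * qpoch 'X^2 n) (1 : {poly R}).
Proof.
move=> le_k2n; have split_k := qbinom_qpoch ('X^2 : {poly R}) le_k2n.
have [le_kn | lt_nk] := leqP k n.
  rewrite (minn_idPl _); last by lia.
  apply: (qbinom_qpochXn_congX (b := 2 * n - k)); [by [] | by rewrite subnKC | lia].
rewrite (minn_idPr _); last by lia.
apply: (qbinom_qpochXn_congX (b := k)); [by [] | | lia].
by rewrite subnK // -mulrA [qpoch _ _ * _]mulrC mulrA.
Qed.

Lemma jacobi_congX n :
  congX n.+1 (qpoch 'X^2 n * (oddprod n * oddprod n)) (theta_trunc n).
Proof.
rewrite oddprod_sqr mulrCA big_distrr big_distrr; apply: congX_sum => k /=.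
have le_k2n : (k <= 2 * n)%N by rewrite -ltnS.
set d := (`|k - n| ^ 2)%N; set G := qbinom _ _ _.
apply: congX_leq (jacobi_order le_k2n) _.
have -> : (-1) ^+ n * (qpoch 'X^2 n * ((-1) ^+ k * G * 'X^d)) =
    'X^d * ((-1) ^+ (k + n) * (G * qpoch 'X^2 n)) by rewrite exprD; ring.
rewrite [_ * 'X^d]mulrC -[X in congX _ _ (_ * X)]mulr1.
by apply: congX_mulXn; apply: congXMl; apply: qbinom_qpoch_congX.
Qed.

End JacobiTripleProduct.

(* The exponents of the triple product up to X^(2n): 2j once, 2j - 1 twice. *)
Definition theta_exps n : seq nat :=
  [seq 2 * j.+1 | j <- iota 0 n] ++
  [seq (2 * j).+1 | j <- iota 0 n] ++ [seq (2 * j).+1 | j <- iota 0 n].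

Lemma theta_exps_gt0 n : all (leq 1) (theta_exps n).
Proof. by apply/allP => e; rewrite !mem_cat => /or3P [] /mapP [j _ ->]; lia. Qed.

Lemma sum_divisors_iota l B (P : pred nat) : 0 < l -> l < B ->
  \sum_(d <- divisors l | P d) d = \sum_(0 <= d < B | (d %| l) && P d) d.
Proof.
move=> l_gt0 lt_lB; rewrite -big_filter -[RHS]big_filter.
apply/perm_big/uniq_perm; rewrite ?filter_uniq ?divisors_uniq ?iota_uniq // => d.
rewrite !mem_filter -dvdn_divisors // mem_iota add0n subn0.
case: (boolP (d %| l)) => [dvd_dl | _] /=; last by rewrite andbF.
by rewrite (leq_ltn_trans (dvdn_leq l_gt0 dvd_dl) lt_lB) andbT.
Qed.

Lemma sum_nat_pairs n (f : nat -> nat) :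
  \sum_(0 <= d < (2 * n).+1) f d = f 0 + \sum_(0 <= j < n) (f (2 * j).+1 + f (2 * j).+2).
Proof.
elim: n => [|n IH]; first by rewrite muln0 big_nat1 big_geq // addn0.
rewrite (_ : (2 * n.+1).+1 = (2 * n).+3); last by lia.
by rewrite big_nat_recr // big_nat_recr // IH big_nat_recr //= !addnA.
Qed.

Lemma sum_theta_exps_dvdn n l : 0 < l <= n ->
  \sum_(e <- theta_exps n) e * (e %| l) = sigma l + sigma_o l.
Proof.
case/andP=> l_gt0 le_ln; have lt_l2n : l < (2 * n).+1 by lia.
rewrite /sigma /sigma_o !(sum_divisors_iota _ l_gt0 lt_l2n).
rewrite [X in X + _]big_mkcond [X in _ + X]big_mkcond /= !sum_nat_pairs.
rewrite dvd0n (negPf (lt0n_neq0 l_gt0)) !add0n.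
rewrite /theta_exps !big_cat !big_map /index_iota subn0 -!big_split /=.
rewrite [LHS]addnA -big_split /= -big_split /=.
apply: eq_bigr => j _; rewrite oddM /= (_ : 2 * j.+1 = (2 * j).+2); last by lia.
by case: ((2 * j).+2 %| l); case: ((2 * j).+1 %| l); rewrite /= ?muln0 ?muln1; lia.
Qed.

Lemma odd_sqr_distn (a n : nat) : odd (`|a - n| ^ 2) = odd (a + n).
Proof.
rewrite oddX /= (_ : a + n = `|a - n| + 2 * minn a n); last by lia.
by rewrite oddD oddM addbF.
Qed.

Definition box_count k s i :=
  #|[set v : {ffun 'I_k -> 'I_(2 * s).+1} | \sum_j `|v j - s| ^ 2 == i]|.

Lemma r_box_count k i : r k i = box_count k i i.
Proof.
rewrite /box_count -addn1; apply: eq_card => v; rewrite !inE -eqz_nat.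
rewrite (big_morph Posz PoszD (erefl _)); congr (_ == _); apply: eq_bigr => j _.
by rewrite -abszX gez0_abs ?sqr_ge0.
Qed.

Lemma box_count_shift k s i : i <= s -> box_count k s i = box_count k i i.
Proof.
move=> le_is.
pose shift (v : {ffun 'I_k -> 'I_(2 * i).+1}) : {ffun 'I_k -> 'I_(2 * s).+1} :=
  [ffun j => inord (v j + (s - i))].
have val_shift v j : (shift v j : nat) = v j + (s - i).
  by rewrite ffunE inordK //; have := ltn_ord (v j); lia.
have shift_inj : injective shift.
  move=> v1 v2 eq_v; apply/ffunP => j; apply/ord_inj.
  by have := val_shift v1 j; rewrite eq_v val_shift /=; lia.
have dist_shift v j : `|shift v j - s| = `|v j - i|.
  by rewrite val_shift; lia.
rewrite /box_count -(card_imset _ shift_inj); apply: eq_card => w.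
rewrite inE; apply/idP/imsetP => [sum_w | [v]].
  have close_w j : `|w j - s| <= i.
    have : `|w j - s| ^ 2 <= i by move/eqP: sum_w => <-; rewrite (bigD1 j) //= leq_addr.
    by move: `|_|%N => d; nia.
  pose v : {ffun 'I_k -> 'I_(2 * i).+1} := [ffun j => inord (w j - (s - i))].
  have def_w : w = shift v.
    by apply/ffunP => j; apply/ord_inj; rewrite val_shift ffunE inordK; have := close_w j; lia.
  exists v => //; rewrite inE; move: sum_w; rewrite def_w.
  by under eq_bigr => j _ do rewrite dist_shift.
by rewrite inE => sum_v ->; under eq_bigr => j _ do rewrite dist_shift.
Qed.

Section ThetaSeries.
Variable R : comNzRingType.
Local Open Scope ring_scope.

Lemma coef_theta_truncX n k i : (i <= n)%N ->
  (theta_trunc R n ^+ k)`_i = (-1) ^+ i * (r k i)%:R.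
Proof.
move=> le_in; rewrite -{1}[k]card_ord -prodr_const bigA_distr_bigA coef_sum.
have sign_dist (a : nat) : (-1) ^+ (a + n) = (-1) ^+ (`|a - n| ^ 2)%N :> {poly R}.
  by rewrite -signr_odd -odd_sqr_distn signr_odd.
under eq_bigr => f _ do rewrite big_split /= (eq_bigr _ (fun j _ => sign_dist (f j))).
under eq_bigr => f _ do rewrite !prodrXr -(rmorph_sign polyC) coefCM coefXn.
rewrite r_box_count -(box_count_shift _ le_in) /box_count -sum1_card natr_sum big_distrr /=.
rewrite [RHS]big_mkcond /=; apply: eq_bigr => f _; rewrite inE eq_sym.
by case: ifP => [/eqP ->|_]; rewrite ?mulr1 ?mulr0.
Qed.

Lemma coef_sum_lambert_theta_exps n l : (l <= n)%N ->
  (\sum_(e <- theta_exps n) lambert R e n.+1)`_l =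
  ((sigma l + sigma_o l) * (0 < l))%N%:R.
Proof.
move=> le_ln; have exp_gt0 := allP (theta_exps_gt0 n); rewrite coef_sum big_seq.
under eq_bigr => e /exp_gt0 e_gt0 do rewrite coef_lambert ?(leqW le_ln) //.
rewrite -big_seq -natr_sum; case: l le_ln => [|l] le_ln.
  by rewrite muln0 big1 // => e _; rewrite andbF muln0.
rewrite muln1 -(sum_theta_exps_dvdn (n := n)) //.
by congr (_%:R); apply: eq_bigr => e _; rewrite andbT.
Qed.

Lemma prod_theta_exps n :
  \prod_(e <- theta_exps n) (1 - 'X^e) = qpoch 'X^2 n * (oddprod R n * oddprod R n).
Proof.
have iota_ord (F : nat -> {poly R}) : \prod_(j <- iota 0 n) F j = \prod_(j < n) F j.
  by rewrite -(big_mkord xpredT) /index_iota subn0.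
rewrite /theta_exps !big_cat !big_map !iota_ord.
by congr (_ * _); apply: eq_bigr => j _; rewrite -exprM.
Qed.

Lemma congX_xderiv_theta_truncX n k :
  congX n.+1 (xderiv (theta_trunc R n ^+ k))
    (- ((\sum_(e <- theta_exps n) lambert R e n.+1) *+ k) * theta_trunc R n ^+ k).
Proof.
apply: congX_xderivX; have jacobi := jacobi_congX R n; rewrite -prod_theta_exps in jacobi.
apply: congX_trans (congX_xderiv (congX_sym jacobi)) _.
apply: congX_trans (congX_xderiv_prod_1subXn R n.+1 (theta_exps_gt0 n)) _.
exact: congXMl.
Qed.

Lemma theta_power_recurrence k n :
  \sum_(1 <= i < n.+1) ((sigma i + sigma_o i) * k)%N%:R * (-1) ^+ (n - i) * (r k (n - i))%:R
  = - ((-1) ^+ n * (r k n)%:R *+ n) :> R.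
Proof.
have := congX_coef (congX_xderiv_theta_truncX n k) (ltnSn n).
rewrite coef_xderiv coef_theta_truncX // mulNr coefN coefM => ->; rewrite opprK.
rewrite big_ord_recl coefMn coef_sum_lambert_theta_exps // muln0 mul0rn mul0r add0r.
rewrite big_add1 /= big_mkord; apply: eq_bigr => i _.
rewrite /bump /= add1n coefMn coef_sum_lambert_theta_exps // coef_theta_truncX ?leq_subr //.
by rewrite ltn0Sn muln1 natrM -mulr_natr; ring.
Qed.

End ThetaSeries.

Local Open Scope ring_scope.

Theorem mainTheorem17 (k n : nat) (hk : (2 <= k)%N) (hn : (1 <= n)%N) :
  (k%:Z * \sum_(1 <= i < n.+1)
      ((sigma i + sigma_o i)%:Z * (-1) ^+ (n - i) * (r k (n - i))%:Z)
   = (-1) ^+ n.+1 * n%:Z * (r k n)%:Z :> int).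
Proof.
rewrite big_distrr /= (eq_bigr (fun i => ((sigma i + sigma_o i) * k)%N%:R *
    (-1) ^+ (n - i) * (r k (n - i))%:R)) => [|i _]; last by rewrite natrM !natz; ring.
by rewrite theta_power_recurrence -mulr_natr !natz exprS; ring.
Qed.
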